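(* Under the system model and Algorithm NCA of the context, if $Q_s[0]=Z[0]=0$ for all $s$, then for all $t\ge 0$ and all $s$, $$Q_s[t]\le \frac{b_sV}{2},\qquad Z[t]\le \max_{s}\{b_s\}\frac{CVK}{2}+P_{peak}.$$ Consequently the encoder queues are rate stable ($\lim_{t\to\infty}Q_s[t]/t=0$ w.p.1) and the time-average power constraint $\limsup_{T\to\infty}\frac1T\sum_{t=0}^{T-1}P[t]\le P_{av}$ holds with probability 1.
   Context: System model. Time is slotted, $t=0,1,2,\dots$. One transmitter serves $S$ receivers. The channel state in slot $t$ is $\mathbf h[t]=(h_1[t],\dots,h_S[t])$ (constant within a slot); the transmitter only knows an imperfect estimate $\hat{\mathbf h}[t]=(\hat h_1[t],\dots,\hat h_S[t])$. The pairs $(h_s[t],\hat h_s[t])$ are i.i.d. across $t$ and independent across $s$, and the conditional law of $h_s$ given $\hat h_s$ is known to the transmitter; $E_{\mathbf h}\{\cdot\mid\hat h_s[t]\}$ denotes conditional expectation over the true channel given the estimate. The transmit power $P[t]$ satisfies $0\le P[t]\le P_{peak}$. The mutual information per symbol delivered to receiver $s$ is $I(h_s,P)$, nondecreasing and concave in $P$, with $I(h_s,0)=0$, $I(h_s,P_{peak})\le I_{\max}$ with probability 1, and $\frac{\partial}{\partial P}E_{\mathbf h}\{I(h_s,P)\mid\hat h_s\}\big|_{P=0}\le C$ for all $\hat h_s$, for finite constants $I_{\max},C>0$. Each packet has $K$ symbols. $c[t]\in\{0,1,\dots,S\}$ is the receiver scheduled in slot $t$ ($0$ = nobody; then $P[t]=0$).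 Rateless coding and queues. Receiver $s$ is sent a sequence of rateless codes indexed by $n_s[t]\in\{1,2,\dots\}$ (with $n_s[0]=1$); code $n$ carries $M_s[n]\ge 0$ message bits. The decoder queue $R_s[t]$ (initially $R_s[0]=M_s[1]$) evolves as: $R_s[t+1]=R_s[t]$ if $c[t]\ne s$; $R_s[t+1]=R_s[t]-I(h_s[t],P[t])K$ if $c[t]=s$ and $R_s[t]>I(h_s[t],P[t])K$; $R_s[t+1]=M_s[n_s[t]+1]$ if $c[t]=s$ and $R_s[t]\le I(h_s[t],P[t])K$. The ACK variable is $a[t]=s$ if $c[t]=s$ and $R_s[t]\le I(h_s[t],P[t])K$, and $a[t]=0$ otherwise. Then $n_s[t+1]=n_s[t]+1_{\{a[t]=s\}}$. The encoder queue evolves as $Q_s[t+1]=(Q_s[t]-M_s[n_s[t]]1_{\{a[t]=s\}})^++x_s[t]$, where $x_s[t]\in[0,D_s]$ is the admitted data. Let $t_{n,s}=\min\{t\ge 0:n_s[t]=n\}$. The block-size of the $n$th code of receiver $s$ is $$L_s[n]=\min\Big\{\textstyle\sum_{t=t_{n,s}}^{t_{n,s}+l-1}1_{\{c[t]=s\}}:\ M_s[n]\le \sum_{t=t_{n,s}}^{t_{n,s}+l-1}1_{\{c[t]=s\}}I(h_s[t],P[t])K,\ l\ge 1\Big\}.$$ Virtual queues: $Z[t+1]=(Z[t]-P_{av})^++P[t]$ and $W_s[n+1]=W_s[n]+L_s[n]-L_{av}$ (with $W_s[1]=0$), where $P_{av}>0$ and $L_{av}\ge 1$ are given targets. Each receiver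 has a utility $U_s$, concave, nondecreasing, continuously differentiable, $U_s(0)=0$, $U_s'(0)=b_s<\infty$. Algorithm NCA (parameters $\delta_M>0$, $\varepsilon>0$, $V>0$; $M_{\max}=I_{\max}L_{av}K$; initial $M_s[1]\in[0,M_{\max}]$). Encoding control: $M_s[n+1]=(M_s[n]-\delta_M)^+$ if $W_s[n]\ge 0$, and $M_s[n+1]=\min\{M_s[n]+\delta_M,M_{\max}\}$ if $W_s[n]<0$. Power allocation and scheduling: for each $s$ let $P_s[t]\in\arg\max_{P\in[0,P_{peak}]}\,Q_s[t]E_{\mathbf h}\{I(h_s[t],P)\mid\hat h_s[t]\}K-Z[t]P$, and let $\varsigma[t]\in\arg\max_{s}\,Q_s[t]E_{\mathbf h}\{I(h_s[t],P_s[t])\mid\hat h_s[t]\}K-Z[t]P_s[t]$. If $P_{\varsigma[t]}[t]<\varepsilon$ then $c[t]=0$, $P[t]=0$; otherwise $c[t]=\varsigma[t]$, $P[t]=P_{\varsigma[t]}[t]$. Rate control: $x_s[t]\in\arg\max_{x\in[0,D_s]}VU_s(x)-x^2-2Q_s[t]x$. All queues $R_s,Q_s,Z,W_s$ are updated by the rules above. *)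

From Stdlib Require Import Reals Lra Lia.
Open Scope R_scope.

Fixpoint sumR (f : nat -> R) (n : nat) : R :=
  match n with O => 0 | S k => sumR f k + f k end.

Fixpoint countN (p : nat -> bool) (n : nat) : nat :=
  match n with O => O | S k => (countN p k + (if p k then 1 else 0))%nat end.

Definition nondecr_on (D : R -> Prop) (f : R -> R) : Prop :=
  forall x y, D x -> D y -> x <= y -> f x <= f y.

Definition concave_on (D : R -> Prop) (f : R -> R) : Prop :=
  forall x y l, D x -> D y -> 0 <= l <= 1 ->
    l * f x + (1 - l) * f y <= f (l * x + (1 - l) * y).

Definition argmax_on (a b : R) (f : R -> R) (x : R) : Prop :=
  a <= x <= b /\ forall y, a <= y <= b -> f y <= f x.

(* max_{1 <= s <= S} b s  (the paper's max_s b_s, S >= 1) *)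
Fixpoint maxR_1 (b : nat -> R) (S : nat) : R :=
  match S with
  | O => b 1%nat
  | S k => match k with O => b 1%nat | _ => Rmax (maxR_1 b k) (b S) end
  end.

Definition first_time (nidx : nat -> nat -> nat) (s n t0 : nat) : Prop :=
  nidx t0 s = n /\ forall t, (t < t0)%nat -> nidx t s <> n.

(* L_s[n] = Lval : minimum over l >= 1 with
   M_s[n] <= sum_{t=t0}^{t0+l-1} 1{c[t]=s} I(h_s[t],P[t]) K
   of sum_{t=t0}^{t0+l-1} 1{c[t]=s}, where t0 = t_{n,s}. *)
Definition is_block_size {Hc : Type} (I : Hc -> R -> R) (K : nat)
  (h : nat -> nat -> Hc) (c : nat -> nat) (P : nat -> R)
  (nidx : nat -> nat -> nat) (M : nat -> nat -> R)
  (s n Lval : nat) : Prop :=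
  exists t0, first_time nidx s n t0 /\
    let cnt l := countN (fun i => Nat.eqb (c (t0 + i)%nat) s) l in
    let inf l := sumR (fun i => if Nat.eqb (c (t0 + i)%nat) s
                                then I (h (t0 + i)%nat s) (P (t0 + i)%nat) * INR K
                                else 0) l in
    (exists l, (1 <= l)%nat /\ M s n <= inf l /\ Lval = cnt l) /\
    (forall l, (1 <= l)%nat -> M s n <= inf l -> (Lval <= cnt l)%nat).

(* Concavity with I(h,0) = 0 and U(0) = 0 puts each graph below its tangent at the
   origin: E{I | hhat} <= C P and U y - U y0 <= b (y - y0).  The second bound
   shows that rate control admits nothing once 2 Q_s >= b_s V, so Q_s <= b_s V / 2.
   Hence as soon as Z > max_s b_s C V K / 2 >= Q_s C K, the first bound makes every
   positive power unprofitable, nobody transmits and Z cannot grow; this gives the bound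
   on Z.  Bounded queues divided by t vanish, and Z[T] >= sum_{t<T} P[t] - T P_av turns
   the bound on Z into the time-average power constraint. *)
From Stdlib Require Import Reals Lra Lia.
Open Scope R_scope.

Lemma concave_chord_slope (D : R -> Prop) (f : R -> R) (p q : R) :
  concave_on D f -> D 0 -> D p -> f 0 = 0 -> 0 < q <= p -> f p * q <= f q * p.
Proof.
  intros Hconc D0 Dp f0 Hq.
  assert (Hl : 0 <= q / p <= 1).
  { split; [apply Rlt_le, Rdiv_lt_0_compat; lra|].
    apply (Rmult_le_reg_r p); [lra|]. replace (q / p * p) with q by (field; lra). lra. }
  pose proof (Hconc p 0 (q / p) Dp D0 Hl) as H.
  replace (q / p * p + (1 - q / p) * 0) with q in H by (field; lra).
  rewrite f0 in H.
  assert (Hp : q / p * f p * p <= f q * p) by (apply Rmult_le_compat_r; lra).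
  replace (q / p * f p * p) with (f p * q) in Hp by (field; lra). exact Hp.
Qed.

(* The hypothesis says that the right slope of [f] at 0 is at most [d]. *)
Lemma concave_le_linear (D : R -> Prop) (f : R -> R) (d p : R) :
  concave_on D f -> D 0 -> D p -> f 0 = 0 -> 0 < p ->
  (forall e, 0 < e -> exists q, 0 < q <= p /\ f q - f 0 < (d + e) * q) ->
  f p <= d * p.
Proof.
  intros Hconc D0 Dp f0 Hp Hslope.
  destruct (Rle_dec (f p) (d * p)) as [|Hgt]; [assumption|exfalso].
  assert (He : 0 < f p / p - d).
  { replace (f p / p - d) with ((f p - d * p) / p) by (field; lra).
    apply Rdiv_lt_0_compat; lra. }
  destruct (Hslope _ He) as [q [Hq Hfq]].
  replace (d + (f p / p - d)) with (f p / p) in Hfq by ring.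
  pose proof (concave_chord_slope D f p q Hconc D0 Dp f0 Hq) as Hchord.
  assert (Hlt : f q * p < f p / p * q * p) by (apply Rmult_lt_compat_r; lra).
  replace (f p / p * q * p) with (f p * q) in Hlt by (field; lra). lra.
Qed.

Lemma limit1_in_right_slope (f : R -> R) (d pmax p : R) :
  limit1_in (fun q => (f q - f 0) / q) (fun q => 0 < q <= pmax) d 0 -> 0 < p <= pmax ->
  forall e, 0 < e -> exists q, 0 < q <= p /\ f q - f 0 < (d + e) * q.
Proof.
  intros Hlim Hp e He.
  destruct (Hlim e He) as [alp [Halp Hnear]].
  set (q := Rmin p (alp / 2)).
  assert (Hq : 0 < q <= p) by (unfold q, Rmin; destruct Rle_dec; lra).
  assert (Hqa : q <= alp / 2) by apply Rmin_r.
  exists q. split; [exact Hq|].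
  assert (Hdist : Rabs ((f q - f 0) / q - d) < e).
  { apply (Hnear q). simpl; unfold R_dist.
    rewrite Rminus_0_r, Rabs_right; lra. }
  apply Rabs_def2 in Hdist as [Hdist _].
  apply (Rmult_lt_reg_r (/ q)); [apply Rinv_0_lt_compat; lra|].
  replace ((d + e) * q * / q) with (d + e) by (field; lra). unfold Rdiv in Hdist. lra.
Qed.

Lemma derivable_pt_lim_right_slope (f : R -> R) (x d p : R) :
  derivable_pt_lim f x d -> 0 < p ->
  forall e, 0 < e -> exists q, 0 < q <= p /\ f (x + q) - f x < (d + e) * q.
Proof.
  intros Hder Hp e He.
  destruct (Hder e He) as [alp Hnear].
  pose proof (cond_pos alp) as Halp.
  set (q := Rmin p (alp / 2)).
  assert (Hq : 0 < q <= p) by (unfold q, Rmin; destruct Rle_dec; lra).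
  assert (Hqa : q <= alp / 2) by apply Rmin_r.
  exists q. split; [exact Hq|].
  assert (Hdist : Rabs ((f (x + q) - f x) / q - d) < e)
    by (apply Hnear; [lra|rewrite Rabs_right; lra]).
  apply Rabs_def2 in Hdist as [Hdist _].
  apply (Rmult_lt_reg_r (/ q)); [apply Rinv_0_lt_compat; lra|].
  replace ((d + e) * q * / q) with (d + e) by (field; lra). unfold Rdiv in Hdist. lra.
Qed.

Lemma concave_le_limit_slope (f : R -> R) (d pmax : R) :
  concave_on (fun p => 0 <= p <= pmax) f -> f 0 = 0 ->
  limit1_in (fun q => (f q - f 0) / q) (fun q => 0 < q <= pmax) d 0 ->
  forall p, 0 <= p <= pmax -> f p <= d * p.
Proof.
  intros Hconc f0 Hlim p Hp.
  destruct (Req_dec p 0) as [->|Hp0]; [rewrite f0; lra|].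
  apply (concave_le_linear _ f d p Hconc); simpl; try lra.
  apply (limit1_in_right_slope f d pmax); [exact Hlim|lra].
Qed.

Lemma concave_increment_le_derivative (f : R -> R) (d : R) :
  concave_on (fun y => 0 <= y) f -> f 0 = 0 -> derivable_pt_lim f 0 d ->
  forall y0 y, 0 <= y0 <= y -> f y - f y0 <= d * (y - y0).
Proof.
  intros Hconc f0 Hder y0 y Hy.
  destruct (Req_dec y y0) as [->|Hne]; [lra|].
  assert (Hfy : f y <= d * y).
  { apply (concave_le_linear _ f d y Hconc); simpl; try lra.
    intros e He.
    destruct (derivable_pt_lim_right_slope f 0 d y Hder ltac:(lra) e He) as [q Hq].
    rewrite Rplus_0_l in Hq. exists q. exact Hq. }
  destruct (Req_dec y0 0) as [->|Hne0]; [rewrite f0; lra|].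
  pose proof (concave_chord_slope _ f y y0 Hconc ltac:(simpl; lra) ltac:(simpl; lra)
    f0 ltac:(lra)) as Hchord.
  apply (Rmult_le_reg_r y); [lra|].
  assert (f y * (y - y0) <= d * y * (y - y0)) by (apply Rmult_le_compat_r; lra).
  nra.
Qed.

Lemma increment_bound_nonneg (f : R -> R) (d : R) :
  nondecr_on (fun y => 0 <= y) f ->
  (forall y0 y, 0 <= y0 <= y -> f y - f y0 <= d * (y - y0)) -> 0 <= d.
Proof.
  intros Hmono Hincr.
  pose proof (Hincr 0 1 ltac:(lra)).
  pose proof (Hmono 0 1 ltac:(simpl; lra) ltac:(simpl; lra) ltac:(lra)). lra.
Qed.

Lemma maxR_1_ge (b : nat -> R) (S s : nat) : (1 <= s <= S)%nat -> b s <= maxR_1 b S.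
Proof.
  induction S as [|k IH]; intros Hs; [lia|].
  destruct k as [|k]; [replace s with 1%nat by lia; simpl; lra|].
  change (maxR_1 b (S (S k))) with (Rmax (maxR_1 b (S k)) (b (S (S k)))).
  destruct (Nat.eq_dec s (S (S k))) as [->|Hne]; [apply Rmax_r|].
  eapply Rle_trans; [apply IH; lia|apply Rmax_l].
Qed.

Lemma rate_control_le (U : R -> R) (b V q D x : R) :
  0 < V -> (forall y0 y, 0 <= y0 <= y -> U y - U y0 <= b * (y - y0)) ->
  0 <= q <= b * V / 2 ->
  argmax_on 0 D (fun y => V * U y - y * y - 2 * q * y) x -> x <= b * V / 2 - q.
Proof.
  intros HV Hincr Hq [[Hx0 HxD] Hmax].
  destruct (Rle_dec x (b * V / 2 - q)) as [|Hgt]; [assumption|exfalso].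
  set (y0 := b * V / 2 - q).
  pose proof (Hmax y0 ltac:(unfold y0; lra)) as Hopt; simpl in Hopt.
  pose proof (Hincr y0 x ltac:(unfold y0; lra)) as Hinc.
  assert (V * (U x - U y0) <= V * (b * (x - y0))) by (apply Rmult_le_compat_l; lra).
  assert (Hb : b * V = 2 * (y0 + q)) by (unfold y0; lra).
  assert (0 < (x - y0) * (x - y0)) by (apply Rmult_lt_0_compat; unfold y0; lra).
  nra.
Qed.

Lemma queue_le_of_rate_control (U : R -> R) (b V D : R) (q x : nat -> R) :
  0 < V -> 0 <= b -> (forall y0 y, 0 <= y0 <= y -> U y - U y0 <= b * (y - y0)) ->
  q 0%nat = 0 ->
  (forall t, argmax_on 0 D (fun y => V * U y - y * y - 2 * q t * y) (x t)) ->
  (forall t, x t <= q (S t) <= Rmax (q t) 0 + x t) ->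
  forall t, 0 <= q t <= b * V / 2.
Proof.
  intros HV Hb Hincr q0 Hrate Hstep t.
  induction t as [|t IH].
  - rewrite q0. assert (0 <= b * V) by (apply Rmult_le_pos; lra). lra.
  - pose proof (rate_control_le U b V (q t) D (x t) HV Hincr IH (Hrate t)).
    destruct (Hrate t) as [[Hx0 _] _].
    pose proof (Hstep t) as Hs. rewrite Rmax_left in Hs by lra. lra.
Qed.

Lemma encoding_control_nonneg (m w : nat -> R) (dM cap : R) :
  0 <= dM -> 0 <= cap -> 0 <= m 1%nat ->
  (forall n, (1 <= n)%nat -> 0 <= w n -> m (S n) = Rmax (m n - dM) 0) ->
  (forall n, (1 <= n)%nat -> w n < 0 -> m (S n) = Rmin (m n + dM) cap) ->
  forall n, (1 <= n)%nat -> 0 <= m n.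
Proof.
  intros HdM Hcap Hm1 Hdec Hinc n Hn.
  induction n as [|[|n] IH]; [lia|exact Hm1|].
  destruct (Rle_lt_dec 0 (w (S n))) as [Hw|Hw].
  - rewrite Hdec by (lia || lra). apply Rmax_r.
  - rewrite Hinc by (lia || lra). specialize (IH ltac:(lia)).
    unfold Rmin; destruct Rle_dec; lra.
Qed.

Section EncoderQueue.

Context {Hc : Type} {I : Hc -> R -> R} {K : nat} {h : nat -> nat -> Hc}
  {c : nat -> nat} {P : nat -> R} {x Q Rq M : nat -> nat -> R} {nidx : nat -> nat -> nat}.

Hypothesis update_idle : forall t s, c t <> s ->
  Rq (S t) s = Rq t s /\ nidx (S t) s = nidx t s /\ Q (S t) s = Rmax (Q t s) 0 + x t s.
Hypothesis update_partial : forall t s, c t = s -> Rq t s > I (h t s) (P t) * INR K ->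
  Rq (S t) s = Rq t s - I (h t s) (P t) * INR K /\ nidx (S t) s = nidx t s /\
  Q (S t) s = Rmax (Q t s) 0 + x t s.
Hypothesis update_ack : forall t s, c t = s -> Rq t s <= I (h t s) (P t) * INR K ->
  Rq (S t) s = M s (S (nidx t s)) /\ nidx (S t) s = S (nidx t s) /\
  Q (S t) s = Rmax (Q t s - M s (nidx t s)) 0 + x t s.
Hypothesis nidx_init : forall s, nidx 0%nat s = 1%nat.

Lemma nidx_ge1 (t s : nat) : (1 <= nidx t s)%nat.
Proof.
  induction t as [|t IH]; [rewrite nidx_init; lia|].
  destruct (Nat.eq_dec (c t) s) as [Hcs|Hcs].
  - destruct (Rle_lt_dec (Rq t s) (I (h t s) (P t) * INR K)) as [Hr|Hr].
    + destruct (update_ack t s Hcs Hr) as (_ & -> & _). lia.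
    + destruct (update_partial t s Hcs Hr) as (_ & -> & _). lia.
  - destruct (update_idle t s Hcs) as (_ & -> & _). lia.
Qed.

Lemma encoder_queue_step (t s : nat) :
  (forall n, (1 <= n)%nat -> 0 <= M s n) ->
  x t s <= Q (S t) s <= Rmax (Q t s) 0 + x t s.
Proof.
  intros HM.
  pose proof (Rmax_r (Q t s) 0).
  destruct (Nat.eq_dec (c t) s) as [Hcs|Hcs].
  - destruct (Rle_lt_dec (Rq t s) (I (h t s) (P t) * INR K)) as [Hr|Hr].
    + destruct (update_ack t s Hcs Hr) as (_ & _ & ->).
      pose proof (HM (nidx t s) (nidx_ge1 t s)).
      pose proof (Rmax_r (Q t s - M s (nidx t s)) 0).
      assert (Rmax (Q t s - M s (nidx t s)) 0 <= Rmax (Q t s) 0)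
        by (apply Rle_max_compat_r; lra).
      lra.
    + destruct (update_partial t s Hcs Hr) as (_ & _ & ->). lra.
  - destruct (update_idle t s Hcs) as (_ & _ & ->). lra.
Qed.

End EncoderQueue.

Lemma queue_weight_le (q b m V C k : R) :
  0 <= q <= b * V / 2 -> b <= m -> 0 < V -> 0 <= C -> 0 <= k ->
  q * C * k <= m * C * V * k / 2.
Proof.
  intros Hq Hbm HV HC Hk.
  assert (Hqm : q <= m * V / 2) by nra.
  assert (q * (C * k) <= m * V / 2 * (C * k)) by (apply Rmult_le_compat_r; nra).
  lra.
Qed.

Lemma power_allocation_zero (f : R -> R) (q z k C pmax p : R) :
  0 <= q -> 0 <= k -> f 0 = 0 -> (forall p, 0 <= p <= pmax -> f p <= C * p) ->
  q * C * k < z -> argmax_on 0 pmax (fun p => q * f p * k - z * p) p -> p = 0.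
Proof.
  intros Hq Hk f0 Hslope Hz [Hp Hmax].
  specialize (Hmax 0 ltac:(lra)). simpl in Hmax. rewrite f0 in Hmax.
  assert (q * f p * k <= q * (C * p) * k).
  { apply Rmult_le_compat_r; [exact Hk|]. apply Rmult_le_compat_l; auto. }
  nra.
Qed.

Lemma virtual_queue_le (Z P : nat -> R) (Pav B Pmax : R) :
  0 <= Pav -> 0 <= B -> Z 0%nat = 0 ->
  (forall t, Z (S t) = Rmax (Z t - Pav) 0 + P t) ->
  (forall t, 0 <= P t <= Pmax) -> (forall t, B < Z t -> P t = 0) ->
  forall t, Z t <= B + Pmax.
Proof.
  intros HPav HB Z0 HZ HP Hidle t.
  induction t as [|t IH]; [rewrite Z0; pose proof (HP 0%nat); lra|].
  rewrite HZ. pose proof (HP t).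
  destruct (Rle_lt_dec (Z t) B) as [Hle|Hgt].
  - unfold Rmax; destruct Rle_dec; lra.
  - rewrite (Hidle t Hgt). unfold Rmax; destruct Rle_dec; lra.
Qed.

Lemma sumR_le_virtual_queue (Z P : nat -> R) (Pav : R) :
  Z 0%nat = 0 -> (forall t, Z (S t) = Rmax (Z t - Pav) 0 + P t) ->
  forall T, sumR P T <= Z T + INR T * Pav.
Proof.
  intros Z0 HZ T. induction T as [|T IH]; [simpl; rewrite Z0; lra|].
  simpl sumR. rewrite S_INR, HZ.
  pose proof (Rmax_l (Z T - Pav) 0). lra.
Qed.

Lemma time_average_le (P : nat -> R) (Pav B : R) :
  (forall T, sumR P T <= B + INR T * Pav) ->
  forall e, 0 < e -> exists N, forall T, (N <= T)%nat -> (1 <= T)%nat ->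
    sumR P T / INR T <= Pav + e.
Proof.
  intros Hsum e He. destruct (INR_archimed e B He) as [N HN].
  exists N. intros T HNT HT.
  assert (HNT' : INR N <= INR T) by (apply le_INR; lia).
  assert (HT' : 1 <= INR T) by (change 1 with (INR 1); apply le_INR; lia).
  apply (Rmult_le_reg_r (INR T)); [lra|].
  replace (sumR P T / INR T * INR T) with (sumR P T) by (field; lra).
  pose proof (Hsum T). nra.
Qed.

Lemma Un_cv_div_INR_bounded (q : nat -> R) (B : R) :
  (forall t, 0 <= q t <= B) -> Un_cv (fun t => q t / INR t) 0.
Proof.
  intros Hq e He. destruct (INR_archimed e B He) as [N HN].
  exists (S N). intros t Ht. unfold R_dist.
  assert (HNt : INR (S N) <= INR t) by (apply le_INR; lia).
  rewrite S_INR in HNt. pose proof (pos_INR N). destruct (Hq t).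
  rewrite Rminus_0_r, Rabs_right.
  - apply (Rmult_lt_reg_r (INR t)); [lra|].
    replace (q t / INR t * INR t) with (q t) by (field; lra). nra.
  - apply Rle_ge, Rmult_le_pos; [lra|]. apply Rlt_le, Rinv_0_lt_compat; lra.
Qed.

(* Receivers are s = 1..Srx (Srx = S in the paper); c t = 0 means nobody is scheduled.  Every trajectory of NCA
   (arbitrary tie-breaking in the argmax's) along every realisation of the
   channel/estimate sequences is covered, so the "w.p.1" claims hold. *)
Theorem lemma3
  (Srx K : nat) (Hc He : Type)
  (I : Hc -> R -> R)                 (* I(h,P) *)
  (EI : nat -> He -> R -> R)         (* EI s hhat P = E{ I(h_s,P) | hhat_s = hhat } *)
  (Ppeak Pav Imax C Lav V eps dM : R)
  (U dU : nat -> R -> R) (b D : nat -> R)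
  (h : nat -> nat -> Hc) (hhat : nat -> nat -> He)
  (* trajectory of NCA *)
  (c : nat -> nat) (P : nat -> R) (Ps : nat -> nat -> R) (sig : nat -> nat)
  (x : nat -> nat -> R) (Q Rq : nat -> nat -> R) (Z : nat -> R)
  (nidx : nat -> nat -> nat) (M W : nat -> nat -> R) :
  (1 <= Srx)%nat -> (1 <= K)%nat ->
  0 <= Ppeak -> 0 < Pav -> 0 < Imax -> 0 < C -> 1 <= Lav ->
  (forall hv, nondecr_on (fun p => 0 <= p <= Ppeak) (I hv)) ->
  (forall hv, concave_on (fun p => 0 <= p <= Ppeak) (I hv)) ->
  (forall hv, I hv 0 = 0) ->
  (forall t s, I (h t s) Ppeak <= Imax) ->
  (forall s e, nondecr_on (fun p => 0 <= p <= Ppeak) (EI s e)) ->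
  (forall s e, concave_on (fun p => 0 <= p <= Ppeak) (EI s e)) ->
  (forall s e, EI s e 0 = 0) ->
  (forall s e, exists d, d <= C /\
     limit1_in (fun p => (EI s e p - EI s e 0) / p) (fun p => 0 < p <= Ppeak) d 0) ->
  (forall s, (1 <= s <= Srx)%nat ->
     (forall y, derivable_pt_lim (U s) y (dU s y)) /\ continuity (dU s) /\
     concave_on (fun y => 0 <= y) (U s) /\ nondecr_on (fun y => 0 <= y) (U s) /\
     U s 0 = 0 /\ dU s 0 = b s /\ 0 <= D s) ->
  0 < dM -> 0 < eps -> 0 < V ->
  (forall s, Q 0%nat s = 0) -> Z 0%nat = 0 ->
  (forall s, nidx 0%nat s = 1%nat) ->
  (forall s, Rq 0%nat s = M s 1%nat) ->
  (forall s, W s 1%nat = 0) ->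
  (forall s, 0 <= M s 1%nat <= Imax * Lav * INR K) ->
  (forall s n, (1 <= n)%nat -> 0 <= W s n -> M s (S n) = Rmax (M s n - dM) 0) ->
  (forall s n, (1 <= n)%nat -> W s n < 0 ->
     M s (S n) = Rmin (M s n + dM) (Imax * Lav * INR K)) ->
  (forall s n Lval, (1 <= n)%nat -> is_block_size I K h c P nidx M s n Lval ->
     W s (S n) = W s n + INR Lval - Lav) ->
  (forall t s, (1 <= s <= Srx)%nat ->
     argmax_on 0 Ppeak (fun p => Q t s * EI s (hhat t s) p * INR K - Z t * p) (Ps t s)) ->
  (forall t, (1 <= sig t <= Srx)%nat /\
     forall s, (1 <= s <= Srx)%nat ->
       Q t s * EI s (hhat t s) (Ps t s) * INR K - Z t * Ps t s
       <= Q t (sig t) * EI (sig t) (hhat t (sig t)) (Ps t (sig t)) * INR K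
          - Z t * Ps t (sig t)) ->
  (forall t, Ps t (sig t) < eps -> c t = 0%nat /\ P t = 0) ->
  (forall t, eps <= Ps t (sig t) -> c t = sig t /\ P t = Ps t (sig t)) ->
  (forall t s, (1 <= s <= Srx)%nat ->
     argmax_on 0 (D s) (fun y => V * U s y - y * y - 2 * Q t s * y) (x t s)) ->
  (forall t s, c t <> s ->
     Rq (S t) s = Rq t s /\ nidx (S t) s = nidx t s /\
     Q (S t) s = Rmax (Q t s) 0 + x t s) ->
  (forall t s, c t = s -> Rq t s > I (h t s) (P t) * INR K ->
     Rq (S t) s = Rq t s - I (h t s) (P t) * INR K /\ nidx (S t) s = nidx t s /\
     Q (S t) s = Rmax (Q t s) 0 + x t s) ->
  (forall t s, c t = s -> Rq t s <= I (h t s) (P t) * INR K ->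
     Rq (S t) s = M s (S (nidx t s)) /\ nidx (S t) s = S (nidx t s) /\
     Q (S t) s = Rmax (Q t s - M s (nidx t s)) 0 + x t s) ->
  (forall t, Z (S t) = Rmax (Z t - Pav) 0 + P t) ->
  (forall t s, (1 <= s <= Srx)%nat -> Q t s <= b s * V / 2) /\
  (forall t, Z t <= maxR_1 b Srx * C * V * INR K / 2 + Ppeak) /\
  (forall s, (1 <= s <= Srx)%nat -> Un_cv (fun t => Q t s / INR t) 0) /\
  (forall e, 0 < e -> exists N, forall T, (N <= T)%nat -> (1 <= T)%nat ->
     sumR P T / INR T <= Pav + e).
Proof.
  intros HS _ HPp HPav HImax HC HLav _ _ _ _ _ HEIconc HEI0 HEId HU
    HdM Heps HV HQ0 HZ0 Hn0 _ _ HM1 HMge HMlt _ Hps Hsig Hc0 Hc1 Hx Hup1 Hup2 Hup3 HZ.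
  assert (HKp : 0 <= INR K) by apply pos_INR.
  assert (Hincr : forall s, (1 <= s <= Srx)%nat ->
            forall y0 y, 0 <= y0 <= y -> U s y - U s y0 <= b s * (y - y0)).
  { intros s Hs. destruct (HU s Hs) as (Hder & _ & Hconc & _ & U0 & dU0 & _).
    apply concave_increment_le_derivative; [exact Hconc|exact U0|].
    rewrite <- dU0. apply Hder. }
  assert (Hb : forall s, (1 <= s <= Srx)%nat -> 0 <= b s).
  { intros s Hs. destruct (HU s Hs) as (_ & _ & _ & Hmono & _).
    exact (increment_bound_nonneg (U s) (b s) Hmono (Hincr s Hs)). }
  assert (HQb : forall t s, (1 <= s <= Srx)%nat -> 0 <= Q t s <= b s * V / 2).
  { intros t s Hs. revert t.
    apply (queue_le_of_rate_control (U s) (b s) V (D s) (fun t => Q t s) (fun t => x t s));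
      auto.
    intros t. apply (encoder_queue_step Hup1 Hup2 Hup3 Hn0).
    assert (0 <= Imax * Lav * INR K) by (repeat apply Rmult_le_pos; lra).
    apply (encoding_control_nonneg (M s) (W s) dM (Imax * Lav * INR K)); auto.
    - lra.
    - apply HM1. }
  set (B := maxR_1 b Srx * C * V * INR K / 2).
  assert (HQB : forall t s, (1 <= s <= Srx)%nat -> Q t s * C * INR K <= B).
  { intros t s Hs. apply (queue_weight_le _ (b s)); try lra; [apply HQb, Hs|apply maxR_1_ge, Hs]. }
  assert (HB : 0 <= B).
  { pose proof (HQB 0%nat 1%nat ltac:(lia)) as HQ01. rewrite HQ0, !Rmult_0_l in HQ01. exact HQ01. }
  assert (HEI : forall s e p, 0 <= p <= Ppeak -> EI s e p <= C * p).
  { intros s e p Hp. destruct (HEId s e) as [d [HdC Hlim]].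
    pose proof (concave_le_limit_slope _ d Ppeak (HEIconc s e) (HEI0 s e) Hlim p Hp). nra. }
  assert (HP : forall t, 0 <= P t <= Ppeak).
  { intros t. destruct (Rlt_le_dec (Ps t (sig t)) eps) as [Hlt|Hge].
    - destruct (Hc0 t Hlt) as [_ ->]. lra.
    - destruct (Hc1 t Hge) as [_ ->]. destruct (Hps t _ (proj1 (Hsig t))) as [Hr _]. exact Hr. }
  assert (Hidle : forall t, B < Z t -> P t = 0).
  { intros t HZt. destruct (Hsig t) as [Hs _]. apply Hc0.
    rewrite (power_allocation_zero (EI (sig t) (hhat t (sig t))) (Q t (sig t)) (Z t) (INR K)
      C Ppeak (Ps t (sig t))); auto.
    - apply HQb; exact Hs.
    - pose proof (HQB t _ Hs). lra. }
  assert (HZb : forall t, Z t <= B + Ppeak)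
    by (apply (virtual_queue_le Z P Pav); auto; lra).
  split; [|split; [|split]].
  - intros t s Hs. apply HQb, Hs.
  - exact HZb.
  - intros s Hs. apply (Un_cv_div_INR_bounded _ (b s * V / 2)). intros t. apply HQb, Hs.
  - apply (time_average_le P Pav (B + Ppeak)). intros T.
    pose proof (sumR_le_virtual_queue Z P Pav HZ0 HZ T). pose proof (HZb T). lra.
Qed.
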